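(* Let \(a,b,c\) be positive integers, \(m\) a positive integer that is not a perfect square, with \(\gcd(a,b^2-c^2m)=1\), and let \(A,B\in\mathbb Z\). If \((x_0,y_0,z_0,w_0)\in\mathbb Z^4\) and \((x',y',z',w')\in\mathbb Z^4\) are both solutions of \(a(x+y\sqrt m)+(b+c\sqrt m)(z+w\sqrt m)=A+B\sqrt m\), then \(a\mid z_0-z'\) and \(a\mid w_0-w'\). *)

From mathcomp Require Import all_boot all_order all_algebra.
Set Implicit Arguments. Unset Strict Implicit. Unset Printing Implicit Defensive.
Import Order.TTheory GRing.Theory Num.Theory.
Local Open Scope ring_scope.

Definition qsqrt (R : rcfType) (m u v : int) : R :=
  u%:~R + v%:~R * Num.sqrt (m%:~R : R).

Definition is_square (m : int) : Prop := exists k : int, m = k ^+ 2.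

(** Expanding both sides in the basis [1, sqrt m], which is linearly
    independent over the integers because [m] is not a square, the difference
    [(X, Y, Z, W)] of the two solutions satisfies
    [a (X + Y sqrt m) + (b + c sqrt m) (Z + W sqrt m) = 0].  Multiplying by the
    conjugate [b - c sqrt m] gives [(b^2 - c^2 m) (Z + W sqrt m) = a (...)],
    so [a] divides [(b^2 - c^2 m) Z] and [(b^2 - c^2 m) W], and coprimality
    of [a] and [b^2 - c^2 m] concludes. *)
From mathcomp Require Import all_boot all_order all_algebra.
From mathcomp Require Import ring zify.
Import Order.TTheory GRing.Theory Num.Theory.
Local Open Scope ring_scope.

Lemma is_square_sqr_eq_mul_sqr (m p q : int) :
  0 <= m -> q != 0 -> p ^+ 2 = m * q ^+ 2 -> is_square m.
Proof.
move=> m_ge0 q_neq0 e.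
have en : (`|p| ^ 2 = `|m| * `|q| ^ 2)%N by rewrite -!abszX -abszM e.
have /divnK ep : (`|q| %| `|p|)%N.
  by rewrite -(@dvdn_pexp2r _ _ 2) // en dvdn_mull.
have q2_gt0 : (0 < `|q| ^ 2)%N by rewrite expn_gt0 absz_gt0 q_neq0.
have ek : (`|m| = (`|p| %/ `|q|) ^ 2)%N.
  by apply/eqP; rewrite -(eqn_pmul2r q2_gt0) -expnMn ep en.
by exists (`|p| %/ `|q|)%N%:Z; rewrite -(gez0_abs m_ge0) ek; lia.
Qed.

Section QuadraticSurd.

Variables (R : rcfType) (m : int).
Hypothesis m_ge0 : 0 <= m.

Lemma sqr_sqrt_int : Num.sqrt (m%:~R : R) ^+ 2 = m%:~R.
Proof. by rewrite sqr_sqrtr // ler0z. Qed.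

Lemma qsqrtD u v u' v' :
  qsqrt R m u v + qsqrt R m u' v' = qsqrt R m (u + u') (v + v').
Proof. by rewrite /qsqrt !rmorphD /=; ring. Qed.

Lemma qsqrtN u v : - qsqrt R m u v = qsqrt R m (- u) (- v).
Proof. by rewrite /qsqrt !rmorphN /=; ring. Qed.

Lemma intr_mul_qsqrt k u v : k%:~R * qsqrt R m u v = qsqrt R m (k * u) (k * v).
Proof. by rewrite /qsqrt !rmorphM /=; ring. Qed.

Lemma qsqrtM u v u' v' :
  qsqrt R m u v * qsqrt R m u' v' = qsqrt R m (u * u' + m * v * v') (u * v' + v * u').
Proof.
have := sqr_sqrt_int; rewrite /qsqrt !(rmorphD, rmorphM) /=.
by set s := Num.sqrt _ => <-; ring.
Qed.

Hypothesis m_nsq : ~ is_square m.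

Lemma qsqrt_eq0 u v : qsqrt R m u v = 0 -> u = 0 /\ v = 0.
Proof.
move=> e.
have v0 : v = 0.
  apply/eqP/negPn/negP => v_neq0; apply: m_nsq.
  apply: (@is_square_sqr_eq_mul_sqr m u v m_ge0 v_neq0).
  apply/eqP; rewrite -(eqr_int R) !(rmorphXn, rmorphM) /=.
  have -> : (u%:~R : R) = - (v%:~R * Num.sqrt (m%:~R : R)).
    by apply/eqP; rewrite -addr_eq0 -e.
  by rewrite sqrrN exprMn sqr_sqrt_int mulrC.
by split=> //; move: e; rewrite /qsqrt v0 mul0r addr0 => /eqP; rewrite intr_eq0 => /eqP.
Qed.

Lemma qsqrt_inj u v u' v' :
  qsqrt R m u v = qsqrt R m u' v' -> u = u' /\ v = v'.
Proof.
move=> /eqP; rewrite -subr_eq0 qsqrtN qsqrtD => /eqP /qsqrt_eq0 [].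
by move=> /eqP + /eqP; rewrite !subr_eq0 => /eqP-> /eqP->.
Qed.

End QuadraticSurd.

Lemma dvdz_conj_norm (a b c m X Y Z W : int) :
  a * X + b * Z + c * m * W = 0 -> a * Y + b * W + c * Z = 0 ->
  (a %| (b ^+ 2 - c ^+ 2 * m) * Z)%Z /\ (a %| (b ^+ 2 - c ^+ 2 * m) * W)%Z.
Proof.
move=> e1 e2; split; apply/dvdzP.
- exists (c * m * Y - b * X).
  transitivity (b * (a * X + b * Z + c * m * W) - c * m * (a * Y + b * W + c * Z)
                + (c * m * Y - b * X) * a); first by ring.
  by rewrite e1 e2; ring.
- exists (c * X - b * Y).
  transitivity (b * (a * Y + b * W + c * Z) - c * (a * X + b * Z + c * m * W)
                + (c * X - b * Y) * a); first by ring.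
  by rewrite e1 e2; ring.
Qed.

Theorem lemma3 (R : rcfType) (a b c m A B : int)
  (ha : 0 < a) (hb : 0 < b) (hc : 0 < c) (hm : 0 < m) (hsq : ~ is_square m)
  (hgcd : gcdz a (b ^+ 2 - c ^+ 2 * m) = 1)
  (x0 y0 z0 w0 x' y' z' w' : int)
  (h0 : a%:~R * qsqrt R m x0 y0 + qsqrt R m b c * qsqrt R m z0 w0 = qsqrt R m A B)
  (h1 : a%:~R * qsqrt R m x' y' + qsqrt R m b c * qsqrt R m z' w' = qsqrt R m A B) :
  (a %| z0 - z')%Z /\ (a %| w0 - w')%Z.
Proof.
have m_ge0 : 0 <= m by exact: ltW.
have components x y z w :
    a%:~R * qsqrt R m x y + qsqrt R m b c * qsqrt R m z w = qsqrt R m A B ->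
    a * x + b * z + c * m * w = A /\ a * y + b * w + c * z = B.
  rewrite intr_mul_qsqrt qsqrtM // qsqrtD => /(@qsqrt_inj R m m_ge0 hsq) [<- <-].
  by split; ring.
have [eA0 eB0] := components _ _ _ _ h0.
have [eA1 eB1] := components _ _ _ _ h1.
have [dZ dW] : (a %| (b ^+ 2 - c ^+ 2 * m) * (z0 - z'))%Z /\
               (a %| (b ^+ 2 - c ^+ 2 * m) * (w0 - w'))%Z.
  apply: (@dvdz_conj_norm _ _ _ _ (x0 - x') (y0 - y')).
  - by rewrite -(subrr A) -{1}eA0 -eA1; ring.
  - by rewrite -(subrr B) -{1}eB0 -eB1; ring.
have cop : coprimez a (b ^+ 2 - c ^+ 2 * m) by rewrite /coprimez hgcd.
by split; rewrite -(Gauss_dvdzr _ cop).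
Qed.
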